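(* For all $n\ge 1$, $|F_n(321,1423,4123)|=F_{n+1}-1$, where $F_n$ is the $n$-th Fibonacci number with $F_0=F_1=1$ and $F_n=F_{n-1}+F_{n-2}$ for $n\ge 2$.
   Context: A permutation $\pi$ avoids a classical pattern $p\in S_k$ if no subsequence of $\pi$ of length $k$ is order-isomorphic to $p$. A Fishburn permutation is a permutation $\pi=\pi_1\cdots\pi_n$ of $[n]$ for which there are no indices $i<j$ with $\pi_j<\pi_i<\pi_{i+1}$ and $\pi_i=\pi_j+1$. $F_n(\sigma_1,\dots,\sigma_k)$ denotes the set of Fishburn permutations of length $n$ avoiding each of the classical patterns $\sigma_1,\dots,\sigma_k$. *)

From mathcomp Require Import all_boot all_fingroup.
Set Implicit Arguments. Unset Strict Implicit. Unset Printing Implicit Defensive.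

(* A permutation pi of [n] is represented as s : 'S_n (a permutation of
   {0,...,n-1}); pi_i (1-based) corresponds to (s (i-1)).+1.  Only order
   comparisons and differences of values matter, so this shift is harmless. *)

(* Classical pattern containment: the pattern p is given in one-line notation
   as a sequence of naturals (e.g. [:: 3; 2; 1] for 321).  s contains p iff
   some strictly increasing choice of size p positions of s gives a
   subsequence order-isomorphic to p. *)
Definition contains_pattern (n : nat) (s : 'S_n) (p : seq nat) : bool :=
  [exists f : {ffun 'I_(size p) -> 'I_n},
     [forall i : 'I_(size p), forall j : 'I_(size p),
        ((i < j)%N ==> (f i < f j)%N) &&
        ((nth 0 p i < nth 0 p j)%N == (s (f i) < s (f j))%N)]].

Definition avoids (n : nat) (s : 'S_n) (p : seq nat) : bool :=
  ~~ contains_pattern s p.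

Definition fishburn (n : nat) (s : 'S_n) : bool :=
  ~~ [exists i : 'I_n, exists j : 'I_n, exists i1 : 'I_n,
        [&& (i < j)%N, (i1 : nat) == i.+1, (s j < s i)%N, (s i < s i1)%N
          & (s i : nat) == (s j).+1]].

Definition Fish_avoid (n : nat) (pats : seq (seq nat)) : {set 'S_n} :=
  [set s : 'S_n | fishburn s && all (avoids s) pats].

Fixpoint fib (n : nat) : nat :=
  match n with
  | 0 => 1
  | 1 => 1
  | (m.+1 as m1).+1 => fib m1 + fib m
  end.

From mathcomp Require Import all_boot all_fingroup.
From mathcomp Require Import zify.
Set Implicit Arguments. Unset Strict Implicit. Unset Printing Implicit Defensive.

(* The core result [admissible_good] shows that
   an admissible permutation of {0,...,m-1} either ends with the fixed point
   m-1, or ends with the descent (m-1)(m-2), or is the exceptional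
   permutation 2 0 3 4 ... (m-1) 1 ([special]); conversely, each of these
   endings applied to an admissible permutation of the shorter segment is
   admissible.

   Counting: [goodset n m] collects the permutations of 'I_n that are
   admissible on {0,...,m-1} and fix every point from m on.  Splitting by
   the three endings gives c(m+2) = c(m+1) + c(m) + [m > 0], whose solution
   with c(0) = c(1) = 1 is c(m) = F_{m+1} - 1 for m >= 1; the theorem is the
   case m = n. *)

Definition permN (m : nat) (g : nat -> nat) : Prop :=
  [/\ forall x y, x < m -> y < m -> g x = g y -> x = y,
      forall u, u < m -> exists2 x, x < m & g x = u
    & forall x, x < m -> g x < m].

Definition fishburnN (m : nat) (g : nat -> nat) : Prop :=
  forall i j, i < j -> j < m -> i.+1 < m ->
    g j < g i -> g i < g i.+1 -> g i = (g j).+1 -> False.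
Definition has321 (m : nat) (g : nat -> nat) : Prop :=
  exists a b c, [/\ a < b, b < c, c < m, g b < g a & g c < g b].
Definition has1423 (m : nat) (g : nat -> nat) : Prop :=
  exists a b c d, [/\ a < b, b < c, c < d, d < m & [/\ g a < g c, g c < g d & g d < g b]].
Definition has4123 (m : nat) (g : nat -> nat) : Prop :=
  exists a b c d, [/\ a < b, b < c, c < d, d < m & [/\ g b < g c, g c < g d & g d < g a]].

Definition admissible (m : nat) (g : nat -> nat) : Prop :=
  [/\ fishburnN m g, ~ has321 m g, ~ has1423 m g & ~ has4123 m g].

(* The exceptional admissible permutation 3 1 4 5 ... m 2 (0-based:
   2 0 3 4 ... (m-1) 1), extended by the identity beyond m. *)
Definition special (m j : nat) : nat :=
  if j == 0 then 2 else if j == 1 then 0 else if j == m.-1 then 1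
  else if j < m then j.+1 else j.

Definition is_special (m : nat) (g : nat -> nat) : Prop :=
  3 <= m /\ forall j, j < m -> g j = special m j.

(* Injectivity, in the contrapositive form used by arithmetic reasoning. *)
Lemma permN_neq m g x y : permN m g -> x < m -> y < m -> x <> y -> g x <> g y.
Proof. by move=> [inj _ _] xm ym xy /(inj _ _ xm ym). Qed.

Lemma admissible_mono m m' g : m' <= m -> admissible m g -> admissible m' g.
Proof.
move=> le [fi a b c]; split.
- by move=> i j ij jm i1m; apply: fi => //; lia.
- by move=> [x [y [z [? ? ? ? ?]]]]; apply: a; exists x, y, z; split=> //; lia.
- by move=> [x [y [z [w [? ? ? ? ?]]]]]; apply: b; exists x, y, z, w; split=> //; lia.
- by move=> [x [y [z [w [? ? ? ? ?]]]]]; apply: c; exists x, y, z, w; split=> //; lia.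
Qed.

Lemma admissible_small m g : m <= 1 -> admissible m g.
Proof.
move=> m1; split.
- by move=> i j ij jm; lia.
- by move=> [x [y [z [? ? ? ? ?]]]]; lia.
- by move=> [x [y [z [w [? ? ? ? ?]]]]]; lia.
- by move=> [x [y [z [w [? ? ? ? ?]]]]]; lia.
Qed.

Lemma admissible_append_fixed m g :
  (forall x, x < m -> g x < m) -> g m = m -> admissible m g -> admissible m.+1 g.
Proof.
move=> cl gm [fi a b c]; split.
- move=> i j ij jm i1m H1 H2 H3.
  have [ejm|] := eqVneq j m; first by subst j; have := cl i ltac:(lia); lia.
  by move=> ?; apply: (fi i j) => //; lia.
- move=> [x [y [z [? ? ? ? ?]]]]; apply: a; exists x, y, z; split=> //.
  have [//|?] := ltnP z m; have e : z = m by lia.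
  by subst z; have := cl y ltac:(lia); lia.
- move=> [x [y [z [w [? ? ? ? [? ? ?]]]]]]; apply: b; exists x, y, z, w; split=> //.
  have [//|?] := ltnP w m; have e : w = m by lia.
  by subst w; have := cl y ltac:(lia); lia.
- move=> [x [y [z [w [? ? ? ? [? ? ?]]]]]]; apply: c; exists x, y, z, w; split=> //.
  have [//|?] := ltnP w m; have e : w = m by lia.
  by subst w; have := cl x ltac:(lia); lia.
Qed.

Lemma admissible_append_swap m g : (forall x, x < m -> g x < m) ->
  g m = m.+1 -> g m.+1 = m -> admissible m g -> admissible m.+2 g.
Proof.
move=> cl g1 g2 [fi a b c].
have V x : x < m.+2 ->
    (x < m /\ g x < m) \/ (x = m /\ g x = m.+1) \/ (x = m.+1 /\ g x = m).
  move=> xl; case: (ltngtP x m) => [xm|xm|->]; last by right; left.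
  - by left; split => //; apply: cl.
  - by right; right; split; [lia | rewrite (_ : x = m.+1) //; lia].
split.
- move=> i j ij jm i1m H1 H2 H3.
  have := V i ltac:(lia); have := V j jm; have := V i.+1 i1m => Vi1 Vj Vi.
  have [i1m'|] := ltnP i.+1 m; last by lia.
  by apply: (fi i j) => //; lia.
- move=> [x [y [z [? ? ? ? ?]]]].
  have := V x ltac:(lia); have := V y ltac:(lia); have := V z ltac:(lia) => Vz Vy Vx.
  have [zm|] := ltnP z m; last by lia.
  by apply: a; exists x, y, z.
- move=> [x [y [z [w [? ? ? ? [? ? ?]]]]]].
  have := V x ltac:(lia); have := V y ltac:(lia); have := V z ltac:(lia);
    have := V w ltac:(lia) => Vw Vz Vy Vx.
  have [wm|] := ltnP w m; last by lia.
  by apply: b; exists x, y, z, w.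
- move=> [x [y [z [w [? ? ? ? [? ? ?]]]]]].
  have := V x ltac:(lia); have := V y ltac:(lia); have := V z ltac:(lia);
    have := V w ltac:(lia) => Vw Vz Vy Vx.
  have [wm|] := ltnP w m; last by lia.
  by apply: c; exists x, y, z, w.
Qed.

Lemma special_lt m N x : 3 <= m -> m <= N -> x < N -> special m x < N.
Proof. by move=> m3; rewrite /special; repeat case: ifP; lia. Qed.

Lemma special_inj m x y : 3 <= m -> special m x = special m y -> x = y.
Proof. by move=> m3; rewrite /special; repeat case: ifP; lia. Qed.

Lemma special_id m x : 3 <= m -> m <= x -> special m x = x.
Proof. by move=> m3; rewrite /special; repeat case: ifP; lia. Qed.

Lemma special_admissible m g : is_special m g -> admissible m g.
Proof.
move=> [m3 gE].
have V x : x < m -> (x = 0 /\ g x = 2) \/ (x = 1 /\ g x = 0) \/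
    (x = m.-1 /\ g x = 1) \/ (2 <= x /\ x.+2 <= m /\ g x = x.+1).
  by move=> xm; rewrite gE // /special; repeat case: ifP; lia.
split.
- move=> i j ij jm i1m H1 H2 H3.
  by have := V i ltac:(lia); have := V j jm; have := V i.+1 i1m; lia.
- move=> [x [y [z [? ? ? ? ?]]]].
  by have := V x ltac:(lia); have := V y ltac:(lia); have := V z ltac:(lia); lia.
- move=> [x [y [z [w [? ? ? ? [? ? ?]]]]]].
  have := V x ltac:(lia); have := V y ltac:(lia); have := V z ltac:(lia).
  by have := V w ltac:(lia); lia.
- move=> [x [y [z [w [? ? ? ? [? ? ?]]]]]].
  have := V x ltac:(lia); have := V y ltac:(lia); have := V z ltac:(lia).
  by have := V w ltac:(lia); lia.
Qed.

Lemma permN_drop_fixed m g : permN m.+1 g -> g m = m -> permN m g.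
Proof.
move=> gP gm; have [inj surj cl] := gP; split.
- by move=> x y xl yl; apply: inj; lia.
- move=> u ul; have [x xl gx] := surj u ltac:(lia); exists x => //.
  have [//|xm] := ltnP x m.
  by move: gx; rewrite (_ : x = m) ?gm; lia.
- move=> x xl; have := cl x ltac:(lia).
  by have := permN_neq gP (x := x) (y := m) ltac:(lia) ltac:(lia) ltac:(lia); lia.
Qed.

Lemma permN_drop_swap m g : permN m.+2 g -> g m = m.+1 -> g m.+1 = m -> permN m g.
Proof.
move=> gP g1 g2; have [inj surj cl] := gP; split.
- by move=> x y xl yl; apply: inj; lia.
- move=> u ul; have [x xl gx] := surj u ltac:(lia); exists x => //.
  have [//|xm] := ltnP x m.
  have [e|e] : x = m \/ x = m.+1 by lia.
  - by move: gx; rewrite e g1; lia.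
  - by move: gx; rewrite e g2; lia.
- move=> x xl; have := cl x ltac:(lia).
  have := permN_neq gP (x := x) (y := m) ltac:(lia) ltac:(lia) ltac:(lia).
  by have := permN_neq gP (x := x) (y := m.+1) ltac:(lia) ltac:(lia) ltac:(lia); lia.
Qed.

Lemma increasing_squeeze (f : nat -> nat) a b c :
  (forall x y, a <= x -> x < y -> y < b -> f x < f y) ->
  (forall x, a <= x -> x < b -> c <= f x < c + (b - a)) ->
  forall x, a <= x -> x < b -> f x = c + (x - a).
Proof.
move=> incr range.
have lo d : a + d < b -> c + d <= f (a + d).
  elim: d => [|d IH] H; first by rewrite !addn0; apply: (proj1 (andP (range a _ _))); lia.
  have := IH ltac:(lia); have := incr (a + d) (a + d).+1 ltac:(lia) ltac:(lia) ltac:(lia).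
  by rewrite !addnS; lia.
have hi d : a + d < b -> f (b.-1 - d) < c + (b - a) - d.
  elim: d => [|d IH] H; first by rewrite !subn0; apply: (proj2 (andP (range b.-1 _ _))); lia.
  have := IH ltac:(lia).
  by have := incr (b.-1 - d.+1) (b.-1 - d) ltac:(lia) ltac:(lia) ltac:(lia); lia.
move=> x ax xb.
have := lo (x - a) ltac:(lia); have := hi (b.-1 - x) ltac:(lia).
have -> : a + (x - a) = x by lia.
have -> : b.-1 - (b.-1 - x) = x by lia.
lia.
Qed.

Section LastEntryNotFixed.
Variables (k : nat) (g : nat -> nat).
Hypothesis gP : permN k.+1 g.
Hypothesis fishburn_g : fishburnN k.+1 g.
Hypothesis no321 : ~ has321 k.+1 g.
Hypothesis no1423 : ~ has1423 k.+1 g.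
Hypothesis no4123 : ~ has4123 k.+1 g.
Hypothesis last_not_fixed : g k <> k.
Hypothesis no_final_swap : ~ (g k.-1 = k /\ g k = k.-1).

Let g_neq x y : x <= k -> y <= k -> x <> y -> g x <> g y.
Proof. by move=> xk yk; apply: permN_neq gP _ _; lia. Qed.

Local Ltac distinct x y :=
  have := @g_neq x y ltac:(lia) ltac:(lia) ltac:(lia).

Let g_onto u : u <= k -> exists2 x, x <= k & g x = u.
Proof. by have [_ surj _] := gP => /surj[x]; exists x. Qed.

Let g_le x : x <= k -> g x <= k.
Proof. by have [_ _ cl] := gP => /cl. Qed.

Lemma last_lt : g k < k.
Proof. by have := g_le (leqnn k); lia. Qed.

(* The value g k + 1 sits at a position i with i + 1 < k, and by the
   Fishburn condition (with j = k) it is followed by a smaller value. *)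
Lemma succ_last_position :
  exists i, [/\ i.+1 < k, g i = (g k).+1 & g i.+1 < g k].
Proof.
have gk := last_lt.
have [i ik gi] := g_onto gk.
have ik' : i < k.
  by case: (ltngtP i k) => [//|ki|eik]; [lia | move: gi; rewrite eik; lia].
have i1k : i.+1 < k.
  case: (ltngtP i.+1 k) => // [|ek]; first lia.
  have ei : i = k.-1 by lia.
  subst i; have [ev|nv] := eqVneq (g k).+1 k; first by case: no_final_swap; split; lia.
  have [p pk gp] := g_onto (leqnn k).
  have pk' : p < k.-1.
    case: (ltngtP p k.-1) => [//|lt|ep]; last by move: gp; rewrite ep; lia.
    have ep : p = k by lia.
    by move: gp; rewrite ep; lia.
  by exfalso; apply: no321; exists p, k.-1, k; split; lia.
exists i; split => //.
have : ~~ (g i < g i.+1) by apply/negP => H; apply: (fishburn_g (i := i) (j := k)) => //; lia.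
distinct i.+1 i; distinct i.+1 k; lia.
Qed.

(* That position is 0: a position i > 0 would create 321, 1423, or a
   Fishburn pattern with the value g 0 - 1. *)
Lemma succ_last_at_0 : g 0 = (g k).+1 /\ g 1 < g k.
Proof.
have [i [i1k gi gi1]] := succ_last_position.
suff i0 : i = 0 by subst i.
case: (posnP i) => // ipos; exfalso.
distinct 0 i; distinct 0 k; distinct 0 i.+1 => ???.
have x4 : ~ g i < g 0 by move=> H; apply: no321; exists 0, i, i.+1; split; lia.
have x5 : ~ g 0 < g i.+1.
  by move=> H; apply: no1423; exists 0, i, i.+1, k; split; [lia..|split; lia].
have y : g 0 < g 1.
  have [e1|ne] := eqVneq i 1; first by subst i; lia.
  distinct 1 0; distinct 1 i.+1 => ??.
  have y3 : ~ (g 1 < g 0 /\ g i.+1 < g 1).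
    by case=> ??; apply: no321; exists 0, 1, i.+1; split; lia.
  have y4 : ~ (g 1 < g i.+1).
    by move=> H; apply: no1423; exists 1, i, i.+1, k; split; [lia..|split; lia].
  lia.
have [q qk gq] := g_onto (leq_trans (leq_pred _) (g_le (leq0n k))).
have q0 : q <> 0 by move=> e; move: gq; rewrite e; lia.
by apply: (fishburn_g (i := 0) (j := q)) => //; lia.
Qed.

(* Avoiding 321 forces g 1 = 0, and then avoiding 4123 forces g k = 1. *)
Lemma second_and_last_values : g 1 = 0 /\ g k = 1.
Proof.
have [g0 g1] := succ_last_at_0.
have k1 : 1 <= k by have := last_lt; lia.
have g1_0 : g 1 = 0.
  case: (posnP (g 1)) => // g1pos; exfalso.
  have [q qk gq] := g_onto (leq_trans (leq_pred _) (g_le k1)).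
  have q2 : 2 <= q by move: gq; case: q {qk} => [|[|q]] //=; lia.
  have qk' : q != k by apply/eqP => e; move: gq; rewrite e; lia.
  by apply: no321; exists 0, 1, q; split; lia.
split => //; case: (ltngtP (g k) 1) => // [|gk]; first lia.
exfalso; have [q qk gq] := g_onto k1.
have q2 : 2 <= q by move: gq; case: q {qk} => [|[|q]] //=; lia.
have qk' : q != k by apply/eqP => e; move: gq; rewrite e; lia.
by apply: no4123; exists 0, 1, q, k; split; [lia..|split; lia].
Qed.

Lemma last_not_fixed_special : is_special k.+1 g.
Proof.
have [g0 _] := succ_last_at_0; have [g1 gk] := second_and_last_values.
have k2 : 2 <= k by have := succ_last_position; case=> i []; lia.
have mid_ge3 j : 2 <= j -> j < k -> 3 <= g j.
  by move=> j2 jk; distinct j 0; distinct j 1; distinct j k; lia.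
have incr a b : 2 <= a -> a < b -> b < k -> g a < g b.
  move=> a2 ab bk; have gb3 := mid_ge3 b ltac:(lia) bk.
  have : ~ g b < g a by move=> H; apply: no321; exists a, b, k; split; lia.
  by distinct a b; lia.
have mid j : 2 <= j -> j < k -> g j = j.+1.
  move=> j2 jk; rewrite (increasing_squeeze (a := 2) (b := k) (c := 3) incr _ j2 jk).
    lia.
  by move=> x x2 xk; have := mid_ge3 x x2 xk; have := g_le (x := x) ltac:(lia); lia.
split; first lia.
move=> j jk; rewrite /special.
case: eqP => [->|j0]; first lia.
case: eqP => [->//|j1]; case: eqP => [->//|jk'].
by rewrite jk; apply: mid; lia.
Qed.

End LastEntryNotFixed.

Definition specialb (m : nat) (g : nat -> nat) : bool :=
  (3 <= m) && all (fun j => g j == special m j) (iota 0 m).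

Lemma specialP m g : reflect (is_special m g) (specialb m g).
Proof.
apply: (iffP andP) => [[m3 /allP gE]|[m3 gE]]; split => //.
- by move=> j jm; apply/eqP/gE; rewrite mem_iota.
- by apply/allP => j; rewrite mem_iota => /andP[_ jm]; rewrite gE.
Qed.

Fixpoint good (m : nat) (g : nat -> nat) : bool :=
  match m with
  | 0 | 1 => true
  | (k.+1 as m1).+1 => ((g m1 == m1) && good m1 g)
                       || [&& g k == m1, g m1 == k & good k g]
                       || specialb m1.+1 g
  end.

Lemma goodE k g : good k.+2 g =
  ((g k.+1 == k.+1) && good k.+1 g) || [&& g k == k.+1, g k.+1 == k & good k g]
  || specialb k.+2 g.
Proof. by []. Qed.

Lemma special_last m g : is_special m g -> g m.-1 = 1.
Proof. by case=> m3 gE; rewrite gE ?/special; [repeat case: ifP|]; lia. Qed.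

Theorem admissible_good m g : permN m g -> (admissible m g <-> good m g).
Proof.
elim: m {-2}m (leqnn m) g => [|N IH] m le g gP.
  by rewrite (_ : m = 0); [split => // _; apply: admissible_small | lia].
case: m le gP => [|[|k]] le gP; try by split => // _; apply: admissible_small.
rewrite goodE.
have [last_fixed|last_moved] := eqVneq (g k.+1) k.+1.
  have gP' := permN_drop_fixed gP last_fixed.
  have {}IH := IH k.+1 ltac:(lia) g gP'; have [_ _ cl'] := gP'.
  split => [gA|/orP[/orP[/andP[_ /IH gA]|/and3P[_ /eqP gk _]]|/specialP gS]].
  - by rewrite /=; apply/orP; left; apply/orP; left; apply/IH; apply: admissible_mono gA; lia.
  - exact: admissible_append_fixed.
  - by move: last_fixed; rewrite gk; lia.
  - by have [m3 _] := gS; move: last_fixed; rewrite (special_last gS); lia.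
have [final_swap|no_swap] := boolP ((g k == k.+1) && (g k.+1 == k)).
  have /andP[/eqP gk /eqP gk1] := final_swap.
  have gP' := permN_drop_swap gP gk gk1.
  have {}IH := IH k ltac:(lia) g gP'; have [_ _ cl'] := gP'.
  split => [gA|/orP[/orP[/andP[] //|/and3P[_ _ /IH gA]]|/specialP gS]].
  - rewrite gk gk1 !eqxx /=; apply/orP; left; apply/IH.
    by apply: admissible_mono gA; lia.
  - exact: admissible_append_swap.
  - exact: special_admissible.
split => [[fi a b c]|/orP[/orP[/andP[] //|/and3P[/eqP gk /eqP gk1 _]]|/specialP gS]].
- apply/orP; right; apply/specialP; apply: last_not_fixed_special gP fi a b c _ _.
  + exact/eqP.
  + by move=> /= [gk gk1]; move: no_swap; rewrite gk gk1 !eqxx.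
- by move: no_swap; rewrite gk gk1 !eqxx.
- exact: special_admissible.
Qed.

Definition sn n (s : 'S_n) (k : nat) : nat :=
  if (insub k : option 'I_n) is Some i then val (s i) else k.

Lemma snE n (s : 'S_n) (i : 'I_n) : sn s i = s i.
Proof. by rewrite /sn valK. Qed.

Lemma snO n (s : 'S_n) k (kn : k < n) : sn s k = s (Ordinal kn).
Proof. by rewrite -snE. Qed.

Lemma sn_perm n (s : 'S_n) : permN n (sn s).
Proof.
split.
- by move=> x y xn yn; rewrite (snO s xn) (snO s yn) => /val_inj/perm_inj [].
- by move=> u un; exists (s^-1 (Ordinal un))%g => //; rewrite snE permKV.
- by move=> x xn; rewrite (snO s xn).
Qed.

Lemma fishburnE n (s : 'S_n) : fishburn s <-> fishburnN n (sn s).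
Proof.
split.
- move=> /negP F i j ij jn i1n H1 H2 H3; apply: F.
  apply/existsP; exists (Ordinal (ltn_trans ij jn)); apply/existsP; exists (Ordinal jn).
  apply/existsP; exists (Ordinal i1n).
  by rewrite -!snO /=; apply/and5P; split => //; apply/eqP.
- move=> F; apply/negP => /existsP[i /existsP[j /existsP[i1]]].
  move=> /and5P[ij /eqP e H1 H2 /eqP H3].
  have i1n : i.+1 < n by rewrite -e ltn_ord.
  have si1 : sn s i.+1 = s i1 by rewrite -e snE.
  by apply: (F i j) => //; rewrite ?si1 !snE.
Qed.

Definition occursN (m : nat) (g : nat -> nat) (p : seq nat) : Prop :=
  exists f : nat -> nat,
    [/\ forall i j, i < j -> j < size p -> f i < f j,
        forall i, i < size p -> f i < m
      & forall i j, i < size p -> j < size p ->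
          (nth 0 p i < nth 0 p j) = (g (f i) < g (f j))].

Lemma contains_patternE n (s : 'S_n) p : contains_pattern s p <-> occursN n (sn s) p.
Proof.
split.
- move=> /existsP[f /forallP fP].
  pose F i := if (insub i : option 'I_(size p)) is Some o then val (f o) else 0.
  have FE i (ip : i < size p) : F i = f (Ordinal ip) by rewrite /F insubT.
  exists F; split.
  + move=> i j ij jp; rewrite (FE i (ltn_trans ij jp)) (FE j jp).
    by have /andP[/implyP/(_ ij) ] := forallP (fP (Ordinal (ltn_trans ij jp))) (Ordinal jp).
  + by move=> i ip; rewrite (FE i ip).
  + move=> i j ip jp; rewrite (FE i ip) (FE j jp) !snE.
    by have /andP[_ /eqP ->] := forallP (fP (Ordinal ip)) (Ordinal jp).
- move=> [F [incr bound order]].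
  apply/existsP; exists [ffun o : 'I_(size p) => Ordinal (bound o (ltn_ord o))].
  apply/forallP => i; apply/forallP => j; rewrite !ffunE /=.
  rewrite -!snO order ?eqxx ?andbT //.
  by apply/implyP => ij; apply: incr.
Qed.

Lemma occurs321 m g : occursN m g [:: 3; 2; 1] <-> has321 m g.
Proof.
split => [[f [incr bound order]]|[a [b [c [ab bc cm h1 h2]]]]].
- exists (f 0), (f 1), (f 2); split.
  + exact: incr.
  + exact: incr.
  + exact: bound.
  + by rewrite -order.
  + by rewrite -order.
- exists (nth 0 [:: a; b; c]); split.
  + by move=> [|[|[|i]]] [|[|[|j]]] //=; lia.
  + by move=> [|[|[|i]]] //=; lia.
  + by move=> [|[|[|i]]] [|[|[|j]]] //=; lia.
Qed.

Lemma occurs1423 m g : occursN m g [:: 1; 4; 2; 3] <-> has1423 m g.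
Proof.
split => [[f [incr bound order]]|[a [b [c [d [ab bc cd dm [h1 h2 h3]]]]]]].
- exists (f 0), (f 1), (f 2), (f 3); split; try exact: incr; first exact: bound.
  by split; rewrite -order.
- exists (nth 0 [:: a; b; c; d]); split.
  + by move=> [|[|[|[|i]]]] [|[|[|[|j]]]] //=; lia.
  + by move=> [|[|[|[|i]]]] //=; lia.
  + by move=> [|[|[|[|i]]]] [|[|[|[|j]]]] //=; lia.
Qed.

Lemma occurs4123 m g : occursN m g [:: 4; 1; 2; 3] <-> has4123 m g.
Proof.
split => [[f [incr bound order]]|[a [b [c [d [ab bc cd dm [h1 h2 h3]]]]]]].
- exists (f 0), (f 1), (f 2), (f 3); split; try exact: incr; first exact: bound.
  by split; rewrite -order.
- exists (nth 0 [:: a; b; c; d]); split.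
  + by move=> [|[|[|[|i]]]] [|[|[|[|j]]]] //=; lia.
  + by move=> [|[|[|[|i]]]] //=; lia.
  + by move=> [|[|[|[|i]]]] [|[|[|[|j]]]] //=; lia.
Qed.

Lemma Fish_avoid_good n (s : 'S_n) :
  (s \in Fish_avoid n [:: [:: 3; 2; 1]; [:: 1; 4; 2; 3]; [:: 4; 1; 2; 3]])
  = good n (sn s).
Proof.
rewrite inE /= /avoids andbT; apply/idP/idP.
- move=> /and4P[F A B C]; apply/(admissible_good (sn_perm s)); split.
  + exact/fishburnE.
  + by move/occurs321/contains_patternE; apply/negP.
  + by move/occurs1423/contains_patternE; apply/negP.
  + by move/occurs4123/contains_patternE; apply/negP.
- move=> /(admissible_good (sn_perm s)) [F A B C]; apply/and4P; split.
  + exact/fishburnE.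
  + by apply/negP => /contains_patternE/occurs321.
  + by apply/negP => /contains_patternE/occurs1423.
  + by apply/negP => /contains_patternE/occurs4123.
Qed.

Lemma specialb_ext m g h : (forall x, x < m -> g x = h x) -> specialb m g = specialb m h.
Proof.
move=> E; congr (_ && _); apply: eq_in_all => j; rewrite mem_iota => /andP[_ jm].
by rewrite E.
Qed.

Lemma good_ext m g h : (forall x, x < m -> g x = h x) -> good m g = good m h.
Proof.
elim: m {-2}m (leqnn m) => [|N IH] m le E; first by rewrite (_ : m = 0) //; lia.
case: m le E => [|[|k]] le E //.
rewrite !goodE (specialb_ext E) (IH k.+1) ?(IH k) ?E //; try lia.
all: by move=> x xl; apply: E; lia.
Qed.

Definition fixed_from n (m : nat) (s : 'S_n) : bool :=
  [forall i : 'I_n, (m <= i) ==> (s i == i)].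

Definition goodset n (m : nat) : {set 'S_n} :=
  [set s : 'S_n | good m (sn s) && fixed_from m s].

Lemma fixed_from_le1 n m (s : 'S_n) : m <= 1 -> fixed_from m s -> s = 1%g.
Proof.
move=> m1 /forallP F.
have F1 (i : 'I_n) : 1 <= i -> s i = i.
  by move=> i1; apply/eqP; have /implyP := F i; apply; lia.
apply/permP => i; rewrite perm1.
case: (posnP i) => [i0|]; last exact: F1.
case: (posnP (s i)) => [si0|si]; first by apply/val_inj => /=; rewrite si0 i0.
by have := F1 (s i) si => /perm_inj.
Qed.

Lemma goodset_le1 n m : m <= 1 -> goodset n m = [set 1%g].
Proof.
move=> m1; apply/setP => s; rewrite !inE (_ : good m _); last by case: m m1 => [|[|]].
apply/idP/eqP => [|->]; first exact: fixed_from_le1.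
by apply/forallP => i; rewrite perm1 eqxx implybT.
Qed.

Lemma fixed_fromS n m (s : 'S_n) (mn : m < n) :
  fixed_from m s = (sn s m == m) && fixed_from m.+1 s.
Proof.
rewrite (snO s mn); apply/forallP/andP => [F|[/eqP e /forallP F] i].
- split; first by have /implyP/(_ (leqnn _))/eqP -> := F (Ordinal mn).
  by apply/forallP => i; apply/implyP => h; have /implyP := F i; apply; lia.
- apply/implyP => h; have [lt|ge] := ltnP m i; first by have /implyP := F i; apply.
  have -> : i = Ordinal mn by apply/val_inj => /=; lia.
  by apply/eqP/val_inj.
Qed.

Section GoodsetRecurrence.
Variables (n k : nat).
Hypothesis kn : k.+1 < n.

Definition ends_fixed : {set 'S_n} :=
  [set s : 'S_n | [&& sn s k.+1 == k.+1, good k.+1 (sn s) & fixed_from k.+2 s]].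
Definition ends_swap : {set 'S_n} :=
  [set s : 'S_n | [&& sn s k == k.+1, sn s k.+1 == k, good k (sn s) & fixed_from k.+2 s]].
Definition ends_special : {set 'S_n} :=
  [set s : 'S_n | specialb k.+2 (sn s) && fixed_from k.+2 s].

Lemma goodset_split : goodset n k.+2 = ends_fixed :|: ends_swap :|: ends_special.
Proof.
apply/setP => s; rewrite !inE goodE.
by case: (sn s k.+1 == k.+1); case: good; case: (sn s k == k.+1); case: good;
   case: specialb; case: fixed_from; rewrite /= ?andbF ?andbT.
Qed.

Lemma ends_fixedE : ends_fixed = goodset n k.+1.
Proof.
apply/setP => s; rewrite !inE (fixed_fromS s kn).
by case: (sn s k.+1 == k.+1); case: good; case: fixed_from.
Qed.

(* Composing with the transposition (k k+1) maps goodset n k bijectively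
   onto ends_swap. *)
Lemma card_ends_swap : #|ends_swap| = #|goodset n k|.
Proof.
have kn' : k < n by lia.
pose xk := Ordinal kn'; pose xk1 := Ordinal kn; pose tau := tperm xk xk1.
have tauE (i : 'I_n) :
    tau i = if (i : nat) == k then xk1 else if (i : nat) == k.+1 then xk else i.
  case: eqP => [e|ne]; first by rewrite (_ : i = xk) ?tpermL //; apply/val_inj.
  case: eqP => [e|ne1]; first by rewrite (_ : i = xk1) ?tpermR //; apply/val_inj.
  by rewrite tpermD // -(inj_eq val_inj) /=; apply/eqP; lia.
have tau_low (t : 'S_n) x : x < k -> sn (tau * t)%g x = sn t x.
  move=> xk'; have xn : x < n by lia.
  by rewrite !(snO _ xn) permM tauE /= ifN ?ifN //; apply/eqP; lia.
have tau_high (t : 'S_n) : fixed_from k t -> fixed_from k.+2 (tau * t)%g.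
  move=> /forallP F; apply/forallP => i; apply/implyP => ki.
  rewrite permM tauE ifN ?ifN; try by apply/eqP; lia.
  by have /implyP := F i; apply; lia.
have -> : ends_swap = [set (tau * t)%g | t in goodset n k].
  apply/setP => s; apply/idP/imsetP.
  - rewrite inE => /and4P[/eqP s1 /eqP s2 G /forallP F].
    exists (tau * s)%g; last by rewrite mulgA tperm2 mul1g.
    rewrite inE (good_ext (h := sn s)) ?G /=; last by move=> x xk'; rewrite tau_low.
    apply/forallP => i; apply/implyP => ki; rewrite permM tauE.
    move: s1 s2; rewrite (snO s kn) (snO s kn') => s1 s2.
    have [e|ne] := eqVneq (i : nat) k.
      by apply/eqP/val_inj; rewrite /= s2 e.
    have [e1|ne1] := eqVneq (i : nat) k.+1.
      by apply/eqP/val_inj; rewrite /= s1 e1.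
    by have /implyP := F i; apply; lia.
  - move=> [t]; rewrite inE => /andP[G F] ->.
    have /forallP Ft := F.
    rewrite inE tau_high // andbT (good_ext (h := sn t)) ?G ?andbT; last first.
      by move=> x xk'; rewrite tau_low.
    rewrite (snO _ kn') (snO _ kn) !permM !tauE /= eqxx ifN; last by apply/eqP; lia.
    rewrite eqxx; have /implyP/(_ (leqnSn k))/eqP -> := Ft xk1.
    by have /implyP/(_ (leqnn k))/eqP -> := Ft xk; rewrite !eqxx.
by rewrite card_imset //; exact: mulgI.
Qed.

(* For k > 0 the only candidate is the exceptional permutation. *)
Lemma card_ends_special : #|ends_special| = (0 < k).
Proof.
have [k0|kpos] := posnP k.
  apply/eqP; rewrite cards_eq0; apply/eqP/setP => s.
  by rewrite !inE /specialb k0.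
have m3 : 3 <= k.+2 by [].
pose f (i : 'I_n) : 'I_n := Ordinal (special_lt (x := i) m3 kn (ltn_ord i)).
have finj : injective f by move=> i j [] /(special_inj m3) e; apply/val_inj.
pose sI := perm finj.
suff -> : ends_special = [set sI] by rewrite cards1.
apply/setP => s; rewrite !inE; apply/idP/eqP => [/andP[/specialP [_ S] /forallP F]|->].
- apply/permP => i; apply/val_inj; rewrite permE /=.
  have [im|im] := ltnP i k.+2; first by rewrite -snE S.
  by rewrite special_id //; have /implyP/(_ im)/eqP -> := F i.
- apply/andP; split.
  + by apply/specialP; split => // j jm; rewrite (snO _ (leq_trans jm kn)) permE.
  + apply/forallP => i; apply/implyP => im; apply/eqP/val_inj.
    by rewrite permE /= special_id.
Qed.

Lemma card_goodset_rec :
  #|goodset n k.+2| = #|goodset n k.+1| + #|goodset n k| + (0 < k).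
Proof.
rewrite goodset_split -ends_fixedE -card_ends_swap -card_ends_special.
have disj (A B : {set 'S_n}) :
    (forall s, s \in A -> s \in B -> False) -> #|A :|: B| = #|A| + #|B|.
  move=> AB; apply/eqP; rewrite (leq_card_setU A B).2 disjoints_subset.
  by apply/subsetP => s sA; rewrite inE; apply/negP; apply: AB.
rewrite disj ?disj // => s; rewrite !inE.
- by move=> /and3P[/eqP a _ _] /and4P[_ /eqP b _ _]; move: a; rewrite b; lia.
- move=> /orP[/and3P[/eqP a _ _]|/and4P[/eqP a /eqP b _ _]] /andP[/specialP gS _].
  + by have [m3 _] := gS; move: a; rewrite (special_last gS); lia.
  + have [_ gE] := gS; have k1 : k = 1 by move: b; rewrite (special_last gS); lia.
    by move: a; rewrite k1 gE.
Qed.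

End GoodsetRecurrence.

(* Fibonacci numbers are positive, so the predecessors below are exact. *)
Lemma fib_gt0 n : 0 < fib n.
Proof.
elim: n {-2}n (leqnn n) => [|N IH] [|[|n]] // le.
by have := IH n.+1 ltac:(lia); change (fib n.+2) with (fib n.+1 + fib n); lia.
Qed.

Definition good_count (m : nat) : nat := if m is 0 then 1 else (fib m.+1).-1.

Lemma good_count_rec k : good_count k.+2 = good_count k.+1 + good_count k + (0 < k).
Proof.
case: k => [|k] //=; have := fib_gt0 k; have := fib_gt0 k.+1.
by rewrite /good_count /=; lia.
Qed.

Lemma card_goodset n m : m <= n -> #|goodset n m| = good_count m.
Proof.
have pair k : k.+1 <= n ->
    #|goodset n k| = good_count k /\ #|goodset n k.+1| = good_count k.+1.
  elim: k => [|k IH] kn; first by rewrite !goodset_le1 // cards1.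
  have [IH0 IH1] := IH ltac:(lia); split => //.
  by rewrite card_goodset_rec // IH1 IH0 good_count_rec.
case: m => [|m] mn; first by rewrite goodset_le1 ?cards1.
by case: (pair m mn).
Qed.

Theorem mainTheorem14 (n : nat) :
  (1 <= n)%N ->
  #|Fish_avoid n [:: [:: 3; 2; 1]; [:: 1; 4; 2; 3]; [:: 4; 1; 2; 3]]| = (fib n.+1).-1.
Proof.
move=> n_pos.
have -> : Fish_avoid n [:: [:: 3; 2; 1]; [:: 1; 4; 2; 3]; [:: 4; 1; 2; 3]] = goodset n n.
  apply/setP => s; rewrite Fish_avoid_good inE.
  suff -> : fixed_from n s by rewrite andbT.
  by apply/forallP => i; rewrite leqNgt ltn_ord.
by rewrite card_goodset //; case: n n_pos.
Qed.
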